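(* Let $A,B,C$ be non-collinear points of the real affine plane. Let $A^{+},A^{-}$ be points on line $\overleftrightarrow{BC}$, $B^{+},B^{-}$ points on line $\overleftrightarrow{CA}$, and $C^{+},C^{-}$ points on line $\overleftrightarrow{AB}$, with $A^{+}\neq C$, $A^{-}\neq B$, $B^{+}\neq A$, $B^{-}\neq C$, $C^{+}\neq B$, $C^{-}\neq A$, and define $$a^{+}=\frac{|BA^{+}|}{|A^{+}C|},\quad b^{+}=\frac{|CB^{+}|}{|B^{+}A|},\quad c^{+}=\frac{|AC^{+}|}{|C^{+}B|},\quad a^{-}=\frac{|CA^{-}|}{|A^{-}B|},\quad b^{-}=\frac{|AB^{-}|}{|B^{-}C|},\quad c^{-}=\frac{|BC^{-}|}{|C^{-}A|}.$$ Let $\ell_1=\overleftrightarrow{B^{+}C^{-}}$, $\ell_2=\overleftrightarrow{C^{+}A^{-}}$, $\ell_3=\overleftrightarrow{A^{+}B^{-}}$, and suppose $$D_1=1-a^{+}a^{-}+b^{-}(1+a^{-})+c^{+}(1+a^{+}),\quad D_2=1-b^{+}b^{-}+c^{-}(1+b^{-})+a^{+}(1+b^{+}),\quad D_3=1-c^{+}c^{-}+a^{-}(1+c^{-})+b^{+}(1+c^{+})$$ are all nonzero (equivalently, no two of the lines are parallel). Let $P=\ell_2\cap\ell_3$, $Q=\ell_3\cap\ell_1$, $R=\ell_1\cap\ell_2$. Then the signed area of triangle $PQR$ is $$|\triangle PQR|=|\triangle ABC|\cdot\frac{\left(a^{+}b^{+}c^{+}+a^{-}b^{-}c^{-}+a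^{+}a^{-}+b^{+}b^{-}+c^{+}c^{-}-1\right)^2}{D_1D_2D_3}.$$
   Context: Segment lengths are signed: for points on one of the lines $\overleftrightarrow{AB}$, $\overleftrightarrow{BC}$, $\overleftrightarrow{CA}$, $|PQ|$ is positive when $\overrightarrow{PQ}$ points in the direction of $\overrightarrow{AB}$, $\overrightarrow{BC}$, $\overrightarrow{CA}$ respectively; $|PP|/|PQ|=0$. Equivalently, e.g. $A^{+}=(B+a^{+}C)/(1+a^{+})$, $A^{-}=(a^{-}B+C)/(1+a^{-})$ as vectors, and similarly for the others. Triangle areas are signed: $|\triangle XYZ|$ and $|\triangle ABC|$ have the same sign exactly when the vertex paths $X$-$Y$-$Z$-$X$ and $A$-$B$-$C$-$A$ traverse their triangles in the same rotational direction. *)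

From Stdlib Require Import Reals.
Open Scope R_scope.

Definition point := (R * R)%type.

(* signed area of triangle XYZ (positive iff X-Y-Z is counterclockwise) *)
Definition sarea (X Y Z : point) : R :=
  ((fst Y - fst X) * (snd Z - snd X) - (fst Z - fst X) * (snd Y - snd X)) / 2.

Definition collinear (X Y Z : point) : Prop := sarea X Y Z = 0.

Definition on_line (X U V : point) : Prop := collinear U V X.

(* signed ratio |XY| / |YZ| for collinear X, Y, Z with Y <> Z:
   the unique t with Y - X = t (Z - Y), computed by projection. *)
Definition sratio (X Y Z : point) : R :=
  ((fst Y - fst X) * (fst Z - fst Y) + (snd Y - snd X) * (snd Z - snd Y)) /
  ((fst Z - fst Y) * (fst Z - fst Y) + (snd Z - snd Y) * (snd Z - snd Y)).

(* Everything is affine-invariant up to the factor [sarea A B C], so it suffices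
   to work in the frame A = (0,0), B = (1,0), C = (0,1).  There the six points
   are explicit rational functions of the ratios, each vertex of PQR is a
   Cramer intersection of two of the lines whose determinant is D_i divided by
   the denominators (1 + ratio), and the area identity becomes a rational
   function identity. *)
From Stdlib Require Import Reals Lra.
Open Scope R_scope.

(* The point Y with |XY| / |YZ| = t, i.e. Y - X = t (Z - Y). *)
Definition ratio_point (t : R) (X Z : point) : point :=
  ((fst X + t * fst Z) / (1 + t), (snd X + t * snd Z) / (1 + t)).

Definition cross (U V U' V' : point) : R :=
  (fst V - fst U) * (snd V' - snd U') - (snd V - snd U) * (fst V' - fst U').

Definition meet (U V U' V' : point) : point :=
  let a := snd U - snd V in
  let b := fst V - fst U in
  let c := fst U * snd V - fst V * snd U in
  let a' := snd U' - snd V' in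
  let b' := fst V' - fst U' in
  let c' := fst U' * snd V' - fst V' * snd U' in
  ((b * c' - b' * c) / cross U V U' V', (c * a' - c' * a) / cross U V U' V').

Lemma on_line_sym X U V : on_line X U V -> on_line X V U.
Proof. unfold on_line, collinear, sarea; intros H; lra. Qed.

Lemma not_collinear_neq A B C : ~ collinear A B C -> A <> B /\ B <> C /\ C <> A.
Proof.
  intros H; repeat split; intro E; subst; apply H; unfold collinear, sarea; field.
Qed.

Lemma sqr_dist_neq0 (X Y : point) :
  X <> Y -> (fst X - fst Y) * (fst X - fst Y) + (snd X - snd Y) * (snd X - snd Y) <> 0.
Proof.
  destruct X as [x1 x2], Y as [y1 y2]; simpl; intros Hneq E.
  destruct (Rplus_sqr_eq_0 (x1 - y1) (x2 - y2) E) as [E1 E2].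
  apply Hneq; f_equal; lra.
Qed.

Lemma parallel_proj dx dy ex ey :
  dx * dx + dy * dy <> 0 -> dx * ey - dy * ex = 0 ->
  ex = (ex * dx + ey * dy) / (dx * dx + dy * dy) * dx /\
  ey = (ex * dx + ey * dy) / (dx * dx + dy * dy) * dy.
Proof.
  intros Hd Hpar; split; field_simplify_eq; auto; apply Rminus_diag_uniq.
  - transitivity (- dy * (dx * ey - dy * ex)); [ring|rewrite Hpar; ring].
  - transitivity (dx * (dx * ey - dy * ex)); [ring|rewrite Hpar; ring].
Qed.

Lemma sratio_ratio_point X Y Z :
  on_line Y X Z -> Y <> Z -> X <> Z ->
  1 + sratio X Y Z <> 0 /\ Y = ratio_point (sratio X Y Z) X Z.
Proof.
  intros HY HYZ HXZ.
  assert (Hd := sqr_dist_neq0 _ _ (not_eq_sym HYZ)).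
  assert (Hpar : (fst Z - fst Y) * (snd Y - snd X) - (snd Z - snd Y) * (fst Y - fst X) = 0)
    by (unfold on_line, collinear, sarea in HY; lra).
  destruct (parallel_proj _ _ _ _ Hd Hpar) as [Ex Ey].
  fold (sratio X Y Z) in Ex, Ey.
  set (t := sratio X Y Z) in *.
  assert (Ht : 1 + t <> 0).
  { intro E; apply HXZ; destruct X, Y, Z; simpl in *; f_equal; nra. }
  split; [exact Ht|].
  destruct X, Y, Z; unfold ratio_point; simpl in *; f_equal; field_simplify_eq; auto; lra.
Qed.

Lemma cramer a b c a' b' c' x y :
  a * x + b * y + c = 0 -> a' * x + b' * y + c' = 0 -> a * b' - a' * b <> 0 ->
  x = (b * c' - b' * c) / (a * b' - a' * b) /\ y = (c * a' - c' * a) / (a * b' - a' * b).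
Proof.
  intros H H' Hdet; split; field_simplify_eq; auto; apply Rminus_diag_uniq.
  - transitivity (b' * (a * x + b * y + c) - b * (a' * x + b' * y + c')); [ring|].
    rewrite H, H'; ring.
  - transitivity (a * (a' * x + b' * y + c') - a' * (a * x + b * y + c)); [ring|].
    rewrite H, H'; ring.
Qed.

Lemma sarea_linear X U V :
  2 * sarea U V X =
  (snd U - snd V) * fst X + (fst V - fst U) * snd X + (fst U * snd V - fst V * snd U).
Proof. unfold sarea; field. Qed.

Lemma on_line_meet X U V U' V' :
  on_line X U V -> on_line X U' V' -> cross U V U' V' <> 0 -> X = meet U V U' V'.
Proof.
  unfold on_line, collinear; intros H H' Hc.
  apply (f_equal (Rmult 2)) in H, H'.
  rewrite Rmult_0_r, sarea_linear in H, H'.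
  assert (Hdet : (snd U - snd V) * (fst V' - fst U') - (snd U' - snd V') * (fst V - fst U) <> 0)
    by (unfold cross in Hc; intro E; apply Hc; lra).
  destruct (cramer _ _ _ _ _ _ _ _ H H' Hdet) as [Ex Ey].
  destruct X as [x y]; unfold meet, cross in *; simpl in *.
  rewrite Ex, Ey; f_equal; field; intro E; apply Hdet; lra.
Qed.

Section AffineFrame.

Variables A B C : point.

Definition affine (p : point) : point :=
  (fst A + fst p * (fst B - fst A) + snd p * (fst C - fst A),
   snd A + fst p * (snd B - snd A) + snd p * (snd C - snd A)).

Lemma sarea_affine p q r :
  sarea (affine p) (affine q) (affine r) = 2 * sarea A B C * sarea p q r.
Proof. unfold sarea, affine; simpl; field. Qed.

Lemma affine_origin : affine (0, 0) = A.
Proof. unfold affine; apply injective_projections; simpl; ring. Qed.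

Lemma affine_unit_x : affine (1, 0) = B.
Proof. unfold affine; apply injective_projections; simpl; ring. Qed.

Lemma affine_unit_y : affine (0, 1) = C.
Proof. unfold affine; apply injective_projections; simpl; ring. Qed.

Lemma affine_ratio_point t p q :
  1 + t <> 0 -> affine (ratio_point t p q) = ratio_point t (affine p) (affine q).
Proof. intros Ht; unfold affine, ratio_point; simpl; f_equal; field; exact Ht. Qed.

Lemma ratio_point_affine t p q X Z :
  1 + t <> 0 -> affine p = X -> affine q = Z ->
  ratio_point t X Z = affine (ratio_point t p q).
Proof. intros Ht <- <-; symmetry; exact (affine_ratio_point t p q Ht). Qed.

Hypothesis ABC_nondeg : ~ collinear A B C.

Lemma affine_surj X : exists p, X = affine p.
Proof.
  exists (sarea A X C / sarea A B C, sarea A B X / sarea A B C).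
  assert (H := ABC_nondeg); unfold collinear, sarea in H.
  unfold affine, sarea; apply injective_projections; simpl; field; lra.
Qed.

Lemma on_line_affine x p q : on_line (affine x) (affine p) (affine q) -> on_line x p q.
Proof.
  unfold on_line, collinear; rewrite sarea_affine; intros H.
  apply Rmult_integral in H as [H|H]; [|exact H].
  exfalso; apply ABC_nondeg; unfold collinear; lra.
Qed.

End AffineFrame.

Lemma Rdiv_neq_0 x y : x <> 0 -> y <> 0 -> x / y <> 0.
Proof. intros Hx Hy; apply Rmult_integral_contrapositive_currified; auto with real. Qed.

Lemma lines_triangle_area_unit_frame ap bp cp am bm cm p q r :
  1 + ap <> 0 -> 1 + bp <> 0 -> 1 + cp <> 0 ->
  1 + am <> 0 -> 1 + bm <> 0 -> 1 + cm <> 0 ->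
  let Ap := ratio_point ap (1, 0) (0, 1) in
  let Bp := ratio_point bp (0, 1) (0, 0) in
  let Cp := ratio_point cp (0, 0) (1, 0) in
  let Am := ratio_point am (0, 1) (1, 0) in
  let Bm := ratio_point bm (0, 0) (0, 1) in
  let Cm := ratio_point cm (1, 0) (0, 0) in
  let D1 := 1 - ap * am + bm * (1 + am) + cp * (1 + ap) in
  let D2 := 1 - bp * bm + cm * (1 + bm) + ap * (1 + bp) in
  let D3 := 1 - cp * cm + am * (1 + cm) + bp * (1 + cp) in
  D1 <> 0 -> D2 <> 0 -> D3 <> 0 ->
  on_line p Cp Am -> on_line p Ap Bm ->
  on_line q Ap Bm -> on_line q Bp Cm ->
  on_line r Bp Cm -> on_line r Cp Am ->
  sarea p q r =
    (ap * bp * cp + am * bm * cm + ap * am + bp * bm + cp * cm - 1) ^ 2 /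
    (2 * (D1 * D2 * D3)).
Proof.
  intros hap hbp hcp ham hbm hcm Ap Bp Cp Am Bm Cm D1 D2 D3 HD1 HD2 HD3
    Hp2 Hp3 Hq3 Hq1 Hr1 Hr2.
  assert (E1 : cross Cp Am Ap Bm = D1 / ((1 + cp) * (1 + am) * (1 + ap) * (1 + bm)))
    by (unfold Cp, Am, Ap, Bm, D1, cross, ratio_point; simpl; field; auto).
  assert (E2 : cross Ap Bm Bp Cm = D2 / ((1 + ap) * (1 + bm) * (1 + bp) * (1 + cm)))
    by (unfold Ap, Bm, Bp, Cm, D2, cross, ratio_point; simpl; field; auto).
  assert (E3 : cross Bp Cm Cp Am = D3 / ((1 + bp) * (1 + cm) * (1 + cp) * (1 + am)))
    by (unfold Bp, Cm, Cp, Am, D3, cross, ratio_point; simpl; field; auto).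
  assert (X1 : cross Cp Am Ap Bm <> 0)
    by (rewrite E1; apply Rdiv_neq_0; [exact HD1|];
        repeat apply Rmult_integral_contrapositive_currified; assumption).
  assert (X2 : cross Ap Bm Bp Cm <> 0)
    by (rewrite E2; apply Rdiv_neq_0; [exact HD2|];
        repeat apply Rmult_integral_contrapositive_currified; assumption).
  assert (X3 : cross Bp Cm Cp Am <> 0)
    by (rewrite E3; apply Rdiv_neq_0; [exact HD3|];
        repeat apply Rmult_integral_contrapositive_currified; assumption).
  rewrite (on_line_meet _ _ _ _ _ Hp2 Hp3 X1), (on_line_meet _ _ _ _ _ Hq3 Hq1 X2),
    (on_line_meet _ _ _ _ _ Hr1 Hr2 X3).
  unfold meet; rewrite E1, E2, E3.
  unfold sarea, Ap, Bp, Cp, Am, Bm, Cm, ratio_point; unfold D1, D2, D3 in *; simpl.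
  field; repeat split; auto.
Qed.

Theorem theorem5 (A B C Ap Am Bp Bm Cp Cm P Q R0 : point) :
  ~ collinear A B C ->
  on_line Ap B C -> on_line Am B C ->
  on_line Bp C A -> on_line Bm C A ->
  on_line Cp A B -> on_line Cm A B ->
  Ap <> C -> Am <> B -> Bp <> A -> Bm <> C -> Cp <> B -> Cm <> A ->
  let ap := sratio B Ap C in
  let bp := sratio C Bp A in
  let cp := sratio A Cp B in
  let am := sratio C Am B in
  let bm := sratio A Bm C in
  let cm := sratio B Cm A in
  let D1 := 1 - ap * am + bm * (1 + am) + cp * (1 + ap) in
  let D2 := 1 - bp * bm + cm * (1 + bm) + ap * (1 + bp) in
  let D3 := 1 - cp * cm + am * (1 + cm) + bp * (1 + cp) in
  D1 <> 0 -> D2 <> 0 -> D3 <> 0 ->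
  (* l1 = Bp Cm, l2 = Cp Am, l3 = Ap Bm *)
  on_line P Cp Am -> on_line P Ap Bm ->
  on_line Q Ap Bm -> on_line Q Bp Cm ->
  on_line R0 Bp Cm -> on_line R0 Cp Am ->
  sarea P Q R0 =
    sarea A B C *
    ((ap * bp * cp + am * bm * cm + ap * am + bp * bm + cp * cm - 1) ^ 2 /
     (D1 * D2 * D3)).
Proof.
  intros HABC HAp HAm HBp HBm HCp HCm nAp nAm nBp nBm nCp nCm
    ap bp cp am bm cm D1 D2 D3 HD1 HD2 HD3 HP2 HP3 HQ3 HQ1 HR1 HR2.
  destruct (not_collinear_neq _ _ _ HABC) as [nAB [nBC nCA]].
  destruct (sratio_ratio_point _ _ _ HAp nAp nBC) as [hap eAp].
  destruct (sratio_ratio_point _ _ _ (on_line_sym _ _ _ HAm) nAm (not_eq_sym nBC)) as [ham eAm].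
  destruct (sratio_ratio_point _ _ _ HBp nBp nCA) as [hbp eBp].
  destruct (sratio_ratio_point _ _ _ (on_line_sym _ _ _ HBm) nBm (not_eq_sym nCA)) as [hbm eBm].
  destruct (sratio_ratio_point _ _ _ HCp nCp nAB) as [hcp eCp].
  destruct (sratio_ratio_point _ _ _ (on_line_sym _ _ _ HCm) nCm (not_eq_sym nAB)) as [hcm eCm].
  fold ap in hap, eAp; fold am in ham, eAm; fold bp in hbp, eBp;
    fold bm in hbm, eBm; fold cp in hcp, eCp; fold cm in hcm, eCm.
  pose proof (affine_origin A B C) as oA.
  pose proof (affine_unit_x A B C) as oB.
  pose proof (affine_unit_y A B C) as oC.
  rewrite (ratio_point_affine A B C _ _ _ _ _ hap oB oC) in eAp.
  rewrite (ratio_point_affine A B C _ _ _ _ _ ham oC oB) in eAm.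
  rewrite (ratio_point_affine A B C _ _ _ _ _ hbp oC oA) in eBp.
  rewrite (ratio_point_affine A B C _ _ _ _ _ hbm oA oC) in eBm.
  rewrite (ratio_point_affine A B C _ _ _ _ _ hcp oA oB) in eCp.
  rewrite (ratio_point_affine A B C _ _ _ _ _ hcm oB oA) in eCm.
  clearbody ap bp cp am bm cm; subst Ap Am Bp Bm Cp Cm.
  destruct (affine_surj A B C HABC P) as [p ->].
  destruct (affine_surj A B C HABC Q) as [q ->].
  destruct (affine_surj A B C HABC R0) as [r ->].
  apply on_line_affine in HP2, HP3, HQ3, HQ1, HR1, HR2; try exact HABC.
  rewrite sarea_affine, (lines_triangle_area_unit_frame ap bp cp am bm cm p q r
    hap hbp hcp ham hbm hcm HD1 HD2 HD3 HP2 HP3 HQ3 HQ1 HR1 HR2).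
  unfold D1, D2, D3 in *; field; repeat split; assumption.
Qed.
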